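(* Let $(G_n)$ be a sequence of graphs with $\min_{v\in V}\delta_v=\omega(\log n)$, let $k\ge3$ be odd and $p_k^\star<p\le1$, and run the $(k,p,\mathcal B)$-Edge-Majority dynamics from the configuration in which every node is $\mathcal R$. Then for every $\gamma>0$ there exists a constant $T=T(p,k,\gamma)$ such that $$\Pr\big(\exists t\le T:\ \phi^{(t)}_{\max}\le\gamma\big)=1-o(1).$$
   Context: $G_n=(V,E)$, $V=\{1,\dots,n\}$, $N(u)$ neighbourhood, $\delta_u=|N(u)|$; asymptotics as $n\to\infty$. States in $\{\mathcal R,\mathcal B\}$; $R^{(t)}$ the $\mathcal R$ nodes at round $t$; $\phi_u^{(t)}=|N(u)\cap R^{(t)}|/\delta_u$, $\phi^{(t)}_{\max}=\max_u\phi_u^{(t)}$. $(k,p,\mathcal B)$-Edge-Majority: in each round $t\ge1$ every node $u$ independently samples $k$ neighbours uniformly with replacement; for each sampled $v$, independently, $u$ sees $v$ as $\mathcal B$ with probability $p$ and otherwise sees $v$'s true state at round $t-1$; $u$ adopts the state seen more often. $F_{p,k}(x)=\Pr[\mathrm{Bin}(k,(1-p)x)\ge(k+1)/2]$. $p_k^\star\in[1/9,1/2)$ is the (unique) value such that for $0\le p<p_k^\star$, $F_{p,k}(x)=x$ on $[0,1]$ has exactly three solutions, for $p=p_k^\star$ exactly two, and for $p>p_k^\star$ only $0$. *)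

From HB Require Import structures.
From mathcomp Require Import all_boot all_order all_algebra.
From mathcomp Require Import all_classical all_reals.
From mathcomp Require Import exp.
Set Implicit Arguments. Unset Strict Implicit. Unset Printing Implicit Defensive.
Import Order.TTheory GRing.Theory Num.Theory.
Local Open Scope ring_scope.
Local Open Scope classical_set_scope.

Section EdgeMajority.
Variable R : realType.

(* A graph on V = {0,...,n-1} is given by an adjacency relation G : rel 'I_n
   (assumed symmetric and irreflexive in the theorem).  Configurations:
   true = state R, false = state B. *)
Definition config (n : nat) := {ffun 'I_n -> bool}.

Definition allR (n : nat) : config n := [ffun=> true].

Definition deg n (G : rel 'I_n) (u : 'I_n) : nat := #|[set v | G u v]|.

Definition phi n (G : rel 'I_n) (x : config n) (u : 'I_n) : R :=
  (#|[set v | G u v && x v]|)%:R / (deg G u)%:R.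

Definition phimax n (G : rel 'I_n) (x : config n) : R :=
  \big[Num.max/0]_(u < n) phi G x u.

(* F_{p,k}(x) = Pr[Bin(k,(1-p)x) >= (k+1)/2] *)
Definition Fpk (p : R) (k : nat) (x : R) : R :=
  let q := (1 - p) * x in
  \sum_(i < k.+1 | (((k.+1) %/ 2)%N <= i)%N) 'C(k, i)%:R * q ^+ i * (1 - q) ^+ (k - i).

(* p_k^star: the threshold above which F_{p,k}(x) = x has only the solution 0
   on [0,1]; below it there are nonzero solutions. *)
Definition pstar (k : nat) : R :=
  sup [set p : R | 0 <= p <= 1 /\ exists x : R, 0 < x <= 1 /\ Fpk p k x = x].

(* One sample of node u: a neighbour v drawn uniformly from N(u) (with
   replacement), together with a noise bit b (b = true with probability p,
   in which case v is seen as B). *)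
Definition sample_weight n (G : rel 'I_n) (p : R) (u : 'I_n)
    (s : 'I_n * bool) : R :=
  (if G u s.1 then (deg G u)%:R^-1 else 0) * (if s.2 then p else 1 - p).

Definition seen_R n (x : config n) (s : 'I_n * bool) : bool := ~~ s.2 && x s.1.

(* Probability that node u is in state R at the next round, given the current
   configuration x: sum over all k independent samples; u adopts the state
   seen more often (k odd, so no ties): R iff 2 * #(R seen) > k. *)
Definition probR n (G : rel 'I_n) (p : R) (k : nat) (x : config n)
    (u : 'I_n) : R :=
  \sum_(s : {ffun 'I_k -> 'I_n * bool})
     (\prod_(i < k) sample_weight G p u (s i)) *
     (if (k < 2 * #|[set i | seen_R x (s i)]|)%N then 1 else 0).

Definition trans n (G : rel 'I_n) (p : R) (k : nat) (x y : config n) : R :=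
  \prod_(u < n) (if y u then probR G p k x u else 1 - probR G p k x u).

(* Pr( exists t <= T : phi_max^(t) <= gamma ), the dynamics started at
   round 0 from the all-R configuration: sum of the probabilities of all
   trajectories (x^(0), ..., x^(T)) with x^(0) = all R hitting the event. *)
Definition prob_hit n (G : rel 'I_n) (p : R) (k : nat) (gamma : R)
    (T : nat) : R :=
  \sum_(w : {ffun 'I_T.+1 -> config n} |
          (w ord0 == allR n) && [exists t, phimax G (w t) <= gamma])
     \prod_(t < T) trans G p k (w (inord t)) (w (inord t.+1)).

End EdgeMajority.

From HB Require Import structures.
From mathcomp Require Import all_boot all_order all_algebra.
From mathcomp Require Import all_classical all_reals.
From mathcomp Require Import topology normedtype sequences derive exp.
From mathcomp Require Import lra zify ring.
Set Implicit Arguments. Unset Strict Implicit. Unset Printing Implicit Defensive.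
Import Order.TTheory GRing.Theory Num.Theory numFieldNormedType.Exports.
Local Open Scope ring_scope.

(** Since [p > p_k^*], the mean-field map [F = Fpk p k] satisfies [F z < z] on
   [(0, 1]], so by compactness [F z <= max (z - 2 eps) g] on [[0, 1]] for some
   [eps > 0], whatever [g > 0].  Given the current configuration, node [u]
   becomes [R] with probability [F (phi u)], independently of the other nodes,
   so by a Chernoff bound its new [phi] exceeds [max_v F (phi v) + eps] with
   probability at most [exp (- deg u * eps^2 / 8)].  With [deg u >= 24 ln n / eps^2]
   and a union bound over the nodes, a round fails with probability at most
   [n^-2]; as long as no round fails, [phi_max] decreases by [eps] per round until
   it is below [g + eps <= gamma], which takes [T = O(1 / eps)] rounds, and the
   [T] rounds fail with total probability at most [T / n]. *)

Section PathMass.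
Variables (R : realFieldType) (C : finType).

Definition path_mass (K : C -> C -> R) (x0 : C) (T : nat) : R :=
  \sum_(w : {ffun 'I_T.+1 -> C} | w ord0 == x0)
    \prod_(t < T) K (w (inord t)) (w (inord t.+1)).

Definition ffun_rcons T (w : {ffun 'I_T.+1 -> C}) (y : C) : {ffun 'I_T.+2 -> C} :=
  [ffun i : 'I_T.+2 => if (i < T.+1)%N then w (inord i) else y].

Lemma ffun_rcons_inord T w y j :
  (j < T.+1)%N -> @ffun_rcons T w y (inord j) = w (inord j).
Proof.
by move=> ltjT; rewrite ffunE inordK ?ltjT // ltnW.
Qed.

Lemma ffun_rcons_last T w y : @ffun_rcons T w y (inord T.+1) = y.
Proof. by rewrite ffunE inordK // ltnn. Qed.

Lemma sum_ffun_rcons T (F : {ffun 'I_T.+2 -> C} -> R) :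
  \sum_w F w = \sum_(w : {ffun 'I_T.+1 -> C}) \sum_(y : C) F (ffun_rcons w y).
Proof.
rewrite pair_big /= (reindex (fun wy => ffun_rcons wy.1 wy.2)) //=.
exists (fun w => ([ffun i => w (widen_ord (leqnSn _) i)], w ord_max)).
  move=> [w y] _ /=; congr pair; last by rewrite ffunE /= ltnn.
  apply/ffunP => i; rewrite !ffunE /= ltn_ord; congr (w _).
  by apply/val_inj; rewrite /= inordK // ltnS ltnW.
move=> w _; apply/ffunP => i; rewrite !ffunE /=.
case: ifP => [ltiT|geiT]; rewrite ?ffunE; congr (w _); apply/val_inj => /=.
  by rewrite inordK.
by apply/eqP; rewrite eqn_leq leqNgt geiT -ltnS ltn_ord.
Qed.

Lemma path_massS K x0 T :
  path_mass K x0 T.+1 =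
  \sum_(w : {ffun 'I_T.+1 -> C} | w ord0 == x0)
    (\prod_(t < T) K (w (inord t)) (w (inord t.+1))) * \sum_y K (w (inord T)) y.
Proof.
rewrite /path_mass big_mkcond sum_ffun_rcons [RHS]big_mkcond.
apply: eq_bigr => w _; rewrite mulr_sumr.
have rcons0 y : ffun_rcons w y ord0 = w ord0.
  by rewrite ffunE /=; congr (w _); apply/val_inj; rewrite /= inordK.
under eq_bigr => y _ do rewrite rcons0.
case: ifP => _; last by rewrite big1.
apply: eq_bigr => y _; rewrite big_ord_recr /= ffun_rcons_inord // ffun_rcons_last.
congr (_ * _); apply: eq_bigr => t _.
by have ltT := ltn_ord t; rewrite !ffun_rcons_inord //; lia.
Qed.

Lemma path_mass_bounds K x0 (delta : R) :
  (forall x y, 0 <= K x y) -> 0 <= delta ->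
  (forall x, 1 - delta <= \sum_y K x y <= 1) ->
  forall T, 1 - T%:R * delta <= path_mass K x0 T <= 1.
Proof.
move=> K_ge0 delta_ge0 rowK; elim=> [|T /andP[IHlo IHhi]].
  rewrite /path_mass (big_pred1 [ffun=> x0]) ?big_ord0 ?mul0r ?subr0 ?lexx //.
  move=> w /=; apply/eqP/eqP => [w0|->]; last by rewrite ffunE.
  by apply/ffunP => i; rewrite ffunE (ord1 i).
have prod_ge0 (w : {ffun 'I_T.+1 -> C}) :
    0 <= \prod_(t < T) K (w (inord t)) (w (inord t.+1)) by exact: prodr_ge0.
rewrite path_massS; apply/andP; split.
  apply: le_trans (_ : (1 - delta) * path_mass K x0 T <= _).
    by rewrite -natr1; nra.
  rewrite /path_mass mulr_sumr; apply: ler_sum => w _.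
  by rewrite mulrC ler_wpM2l //; case/andP: (rowK (w (inord T))).
apply: le_trans IHhi; apply: ler_sum => w _.
by rewrite ler_piMr //; case/andP: (rowK (w (inord T))).
Qed.

End PathMass.

Lemma card_mkset (T : finType) (P : pred T) :
  #|[set v | P v]%classic| = #|[set v | P v]|.
Proof.
rewrite cardsE; apply: eq_card => v.
by apply/idP/idP => [/set_mem|Pv]; last exact: mem_set.
Qed.

Section BinomialCount.
Variable R : comNzRingType.

Definition coef_pairing (k : nat) (f : nat -> R) (P : {poly R}) : R :=
  \sum_(j < k.+1) P`_j * f j.

Lemma coef_pairing_sum k f (I : finType) (F : I -> {poly R}) :
  coef_pairing k f (\sum_i F i) = \sum_i coef_pairing k f (F i).
Proof.
apply: (big_morph (coef_pairing k f)) => [P Q|]; rewrite /coef_pairing.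
  by rewrite -big_split; apply: eq_bigr => j _; rewrite coefD mulrDl.
by rewrite big1 // => j _; rewrite coef0 mul0r.
Qed.

Lemma coef_pairingCXn k f c m :
  (m <= k)%N -> coef_pairing k f (c%:P * 'X^m) = c * f m.
Proof.
move=> le_mk; rewrite /coef_pairing (bigD1 (Ordinal (le_mk : m < k.+1)%N)) //=.
rewrite big1 ?coefCM ?coefXn ?eqxx ?mulr1 ?addr0 // => j neq_jm.
rewrite coefCM coefXn; have /negbTE -> : (j : nat) != m.
  by apply: contra neq_jm => /eqP eq_jm; apply/eqP/val_inj.
by rewrite mulr0 mul0r.
Qed.

Lemma sum_prod_card_binomial (S : finType) (w : S -> R) (A : pred S) k
    (f : nat -> R) :
  \sum_(s : {ffun 'I_k -> S}) (\prod_(i < k) w (s i)) * f #|[set i | A (s i)]|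
  = \sum_(j < k.+1) 'C(k, j)%:R * (\sum_(t | A t) w t) ^+ j
      * (\sum_(t | ~~ A t) w t) ^+ (k - j) * f j.
Proof.
set a := \sum_(t | A t) w t; set b := \sum_(t | ~~ A t) w t.
have genfun : \sum_(s : {ffun 'I_k -> S})
    (\prod_(i < k) w (s i))%:P * 'X^#|[set i | A (s i)]| = (b%:P + a%:P * 'X) ^+ k.
  have -> : b%:P + a%:P * 'X = \sum_t (w t)%:P * (if A t then 'X else 1).
    rewrite (bigID A) /= addrC /a /b !rmorph_sum mulr_suml /=.
    congr (_ + _); apply: eq_bigr => t; first by move=> /negbTE ->; rewrite mulr1.
    by move=> ->.
  rewrite -[k in RHS]card_ord -prodr_const bigA_distr_bigA /=.
  apply: eq_bigr => s _.
  rewrite big_split /= rmorph_prod -big_mkcond /= prodr_const cardsE.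
  by congr (_ * _ ^+ _); apply: eq_card.
have card_le (s : {ffun 'I_k -> S}) : (#|[set i | A (s i)]| <= k)%N.
  by apply: leq_trans (max_card _) _; rewrite card_ord.
have := congr1 (coef_pairing k f) genfun; rewrite coef_pairing_sum.
under eq_bigr => s _ do rewrite coef_pairingCXn ?card_le //.
move=> ->; rewrite exprDn coef_pairing_sum; apply: eq_bigr => j _.
rewrite exprMn_comm; last exact: mulrC.
have -> : b%:P ^+ (k - j) * (a%:P ^+ j * 'X^j) *+ 'C(k, j) =
    ('C(k, j)%:R * a ^+ j * b ^+ (k - j))%:P * 'X^j.
  by rewrite !rmorphM !rmorphXn /= rmorph_nat -mulr_natl; ring.
by rewrite coef_pairingCXn // -ltnS.
Qed.

End BinomialCount.

Lemma halfS_leq_odd (k j : nat) : odd k -> ((k.+1)%/2 <= j)%N = (k < 2 * j)%N.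
Proof. by move=> odd_k; rewrite -[in LHS](odd_double_half k) odd_k; apply/idP/idP; lia. Qed.

Section MajorityMap.
Variables (R : realType) (k : nat).
Hypothesis odd_k : odd k.

Lemma Fpk_at0 (p : R) : Fpk p k 0 = 0.
Proof.
rewrite /Fpk /= mulr0 big1 // => j; rewrite halfS_leq_odd // expr0n.
by case: (nat_of_ord j) => [|?] //; rewrite mulr0 mul0r.
Qed.

Lemma Fpk_le1 (p z : R) : 0 <= (1 - p) * z <= 1 -> Fpk p k z <= 1.
Proof.
set q := (1 - p) * z => /andP[q_ge0 q_le1].
have binomial_total : \sum_(i < k.+1) 'C(k, i)%:R * q ^+ i * (1 - q) ^+ (k - i) = 1.
  rewrite -[RHS](expr1n _ k) -[X in X ^+ k](subrK q) exprDn.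
  by apply: eq_bigr => i _; rewrite -mulr_natl; ring.
rewrite /Fpk -/q -[leRHS]binomial_total [leLHS]big_mkcond /=; apply: ler_sum => i _.
by case: ifP => // _; rewrite !mulr_ge0 ?exprn_ge0 ?subr_ge0.
Qed.

Lemma continuous_Fpk (p : R) : continuous (Fpk p k).
Proof.
pose P : {poly R} := \sum_(i < k.+1 | ((k.+1)%/2 <= i)%N)
  'C(k, i)%:R%:P * ((1 - p)%:P * 'X) ^+ i * (1 - (1 - p)%:P * 'X) ^+ (k - i).
have -> : Fpk p k = horner P.
  apply/funext => z; rewrite /P horner_sum; apply: eq_bigr => i _.
  by rewrite !(hornerE, horner_exp).
exact: continuous_horner.
Qed.

Lemma continuous_id_subFpk (p : R) : continuous (fun z : R => z - Fpk p k z).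
Proof. by move=> z; apply: continuousB => //; exact: continuous_Fpk. Qed.

Lemma Fpk_noiseless_at1 : Fpk (0 : R) k 1 = 1.
Proof.
rewrite /Fpk /= subr0 mulr1 subrr (bigD1 ord_max) /=; last first.
  by rewrite halfS_leq_odd //; lia.
rewrite subnn expr0 mulr1 expr1n mulr1 binn big1 ?addr0 // => j /andP[_ neq_jk].
have lt_jk : (j < k)%N.
  rewrite ltn_neqAle -ltnS ltn_ord andbT.
  by apply: contra neq_jk => /eqP eq_jk; apply/eqP/val_inj.
by rewrite expr0n subn_eq0 leqNgt lt_jk mulr0.
Qed.

Lemma pstar_ge0 : 0 <= pstar R k.
Proof.
apply: ub_le_sup; first by exists 1 => q [/andP[_ ->]].
by split; [rewrite lexx ler01 | exists 1; rewrite ltr01 lexx Fpk_noiseless_at1].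
Qed.

Variable p : R.
Hypotheses (gt_p_pstar : pstar R k < p) (le_p1 : p <= 1).

Lemma p_gt0 : 0 < p.
Proof. exact: le_lt_trans pstar_ge0 gt_p_pstar. Qed.

Lemma Fpk_neq_id z : 0 < z <= 1 -> Fpk p k z != z.
Proof.
move=> z01; apply/eqP => Fz; move: gt_p_pstar; rewrite ltNge => /negP; apply.
apply: ub_le_sup; first by exists 1 => q [/andP[_ ->]].
by split; [rewrite (ltW p_gt0) le_p1 | exists z].
Qed.

Lemma Fpk_lt_id z : 0 < z <= 1 -> Fpk p k z < z.
Proof.
move=> /andP[z_gt0 z_le1]; rewrite ltNge; apply/negP => le_z_Fz.
have F1_lt1 : Fpk p k 1 < 1.
  rewrite lt_neqAle Fpk_neq_id ?ltr01 ?lexx //= Fpk_le1 //.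
  by rewrite mulr1 subr_ge0 le_p1 lerBlDr lerDl (ltW p_gt0).
have [c] : exists2 c, c \in `[z, 1] & c - Fpk p k c = 0.
  apply: IVT => //; first exact/continuous_subspaceT/continuous_id_subFpk.
  by rewrite ge_min le_max; apply/andP; split; apply/orP; [left|right]; lra.
move=> c_in /eqP; rewrite subr_eq0 eq_sym; apply/negP/Fpk_neq_id.
by move: c_in; rewrite in_itv /= => /andP[le_zc ->]; rewrite (lt_le_trans z_gt0 le_zc).
Qed.

Lemma Fpk_uniform_gap (g : R) : 0 < g -> exists2 c : R, 0 < c &
  forall z, 0 <= z <= 1 -> Fpk p k z <= Num.max (z - c) g.
Proof.
move=> g_gt0; have [le_g1|lt1g] := leP g 1; last first.
  exists 1 => // z /andP[z_ge0 z_le1]; rewrite le_max; apply/orP; right.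
  apply: le_trans (ltW lt1g); apply: Fpk_le1.
  rewrite mulr_ge0 ?subr_ge0 //=; apply: le_trans z_le1.
  by rewrite ler_piMl // lerBlDr lerDl ltW // p_gt0.
have [zm] := @EVT_min R (fun z => z - Fpk p k z) g 1 le_g1
  (continuous_subspaceT (@continuous_id_subFpk p)).
rewrite in_itv /= => /andP[g_le_zm zm_le1] min_zm.
have gap_gt0 : 0 < zm - Fpk p k zm.
  by rewrite subr_gt0 Fpk_lt_id // (lt_le_trans g_gt0 g_le_zm).
exists (zm - Fpk p k zm) => // z /andP[z_ge0 z_le1]; rewrite le_max.
have [le_gz|lt_zg] := leP g z.
  by have := min_zm z; rewrite in_itv /= le_gz z_le1 => /(_ isT) ?; apply/orP; left; lra.
apply/orP; right; have [->|z_neq0] := eqVneq z 0; first by rewrite Fpk_at0 ltW.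
by apply: le_trans (ltW lt_zg); apply/ltW/Fpk_lt_id; rewrite lt_neqAle eq_sym z_neq0 z_ge0.
Qed.

Lemma descent_parameters (gamma : R) : 0 < gamma ->
  exists g eps (T : nat), [/\ 0 < eps <= 1, 0 <= g <= 1,
    forall z, 0 <= z <= 1 -> Fpk p k z <= Num.max (z - 2 * eps) g &
    Num.max (1 - T%:R * eps) (g + eps) <= gamma].
Proof.
move=> gamma_gt0.
have [g [g_gt0 g_le1 le_g_gamma]] : exists g : R, [/\ 0 < g, g <= 1 & g <= gamma / 2].
  exists (Num.min (gamma / 2) 1).
  by split; rewrite ?lt_min ?ltr01 ?divr_gt0 // ge_min lexx ?orbT.
have [c c_gt0 gap] := Fpk_uniform_gap g_gt0.
have [eps [eps_gt0 le_2eps_c le_2eps_g]] :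
    exists eps : R, [/\ 0 < eps, 2 * eps <= c & 2 * eps <= g].
  exists (Num.min c g / 2); rewrite divr_gt0 ?lt_min ?c_gt0 //.
  by rewrite mulrC divfK ?pnatr_eq0 // !ge_min lexx /= (lexx g) orbT.
have [T lt_inv_eps_T] : exists T : nat, eps^-1 < T%:R.
  by exists (Num.bound eps^-1); rewrite archi_boundP // invr_ge0 ltW.
exists g, eps, T; split.
- apply/andP; split=> //; lra.
- by rewrite (ltW g_gt0) g_le1.
- move=> z z01; apply: le_trans (gap z z01) _.
  by apply: le_max2; rewrite // lerD2l lerN2.
- have : 1 < T%:R * eps by rewrite -ltr_pdivrMr // div1r.
  by rewrite ge_max; move=> ?; apply/andP; split; lra.
Qed.

End MajorityMap.

Lemma sum_if_const (R : nmodType) (I : finType) (P : pred I) (c : R) :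
  \sum_(v : I) (if P v then c else 0) = c *+ #|[set v | P v]|.
Proof. by rewrite -big_mkcond sumr_const cardsE. Qed.

Lemma sumr_pair (R : nmodType) (I J : finType) (F : I * J -> R) :
  \sum_s F s = \sum_i \sum_j F (i, j).
Proof. by rewrite pair_bigA; apply: eq_bigr => -[]. Qed.

Definition degR n (G : rel 'I_n) (x : config n) (u : 'I_n) : nat :=
  #|[set v | G u v && x v]%classic|.

Lemma expR_sub1_le (R : realType) (lam : R) :
  0 <= lam <= 1 / 2 -> expR lam - 1 <= lam + 2 * lam ^+ 2.
Proof.
move=> lam01; have := expR_ge1Dx (- lam); have := expR_gt0 lam.
have : expR lam * expR (- lam) = 1 by rewrite -expRD subrr expR0.
by nra.
Qed.

Lemma indicator_lt_le_expR (R : realType) (lam s t : R) :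
  0 <= lam -> (t < s)%R%:R <= expR (lam * (s - t)).
Proof.
move=> lam_ge0; have [lt_ts|_] := ltP t s; last exact: expR_ge0.
by apply: le_trans (expR_ge1Dx _); rewrite lerDl mulr_ge0 // subr_ge0 ltW.
Qed.

Lemma bigmax_gt_indicator_le_sum (R : realDomainType) (I : finType) (F : I -> R) x :
  0 <= x -> (x < \big[Num.max/0]_i F i)%R%:R <= \sum_i (x < F i)%R%:R :> R.
Proof.
move=> x_ge0; have [lt_x_max|_] := boolP (x < \big[Num.max/0]_i F i); last first.
  exact: sumr_ge0.
have [|[i _ lt_x_Fi]] := bigmax_gtP _ _ _ _ lt_x_max; first by rewrite ltNge x_ge0.
by rewrite (bigD1 i) //= lt_x_Fi lerDl sumr_ge0.
Qed.

Section OneRound.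
Variables (R : realType) (n : nat) (G : rel 'I_n) (p : R) (k : nat).
Hypotheses (p_ge0 : 0 <= p) (p_le1 : p <= 1) (odd_k : odd k).

Lemma phi_ge0 x u : 0 <= phi R G x u.
Proof. by rewrite /phi divr_ge0. Qed.

Lemma phi_le1 x u : phi R G x u <= 1.
Proof.
have degR_le : (degR G x u <= deg G u)%N.
  rewrite /degR /deg !card_mkset; apply/subset_leq_card/fintype.subsetP => v.
  by rewrite !inE => /andP[].
rewrite /phi -/(degR G x u); have [->|deg_gt0] := posnP (deg G u).
  by rewrite invr0 mulr0.
by rewrite ler_pdivrMr ?ltr0n // mul1r ler_nat.
Qed.

Lemma sample_weight_ge0 u s : 0 <= sample_weight G p u s.
Proof. by rewrite mulr_ge0 //; case: ifP; rewrite ?invr_ge0 ?subr_ge0. Qed.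

Lemma sum_sample_weight u :
  \sum_s sample_weight G p u s = (deg G u != 0)%:R.
Proof.
rewrite sumr_pair.
under eq_bigr => v _ do rewrite big_bool /sample_weight /= -mulrDr addrC subrK mulr1.
rewrite sum_if_const -card_mkset -/(deg G u); have [->|deg_neq0] := eqVneq.
  by rewrite mulr0n.
by rewrite -[_ *+ deg G u]mulr_natr mulVf ?pnatr_eq0.
Qed.

Lemma sum_sample_weight_seen_R x u :
  \sum_(s | seen_R x s) sample_weight G p u s = (1 - p) * phi R G x u.
Proof.
rewrite big_mkcond sumr_pair.
transitivity (\sum_v (if G u v && x v then (deg G u)%:R^-1 * (1 - p) else 0)).
  apply: eq_bigr => v _; rewrite big_bool /seen_R /sample_weight /=.
  by case: (G u v); case: (x v); rewrite ?mul0r ?add0r ?addr0.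
rewrite sum_if_const -card_mkset -/(degR G x u) /phi; rewrite -mulr_natr; ring.
Qed.

Lemma probR_Fpk x u : probR G p k x u = Fpk p k (phi R G x u).
Proof.
(* An isolated node has [phi = 0] (as [x / 0 = 0]) and all its samples have weight [0]. *)
have [deg0|deg_gt0] := posnP (deg G u).
  have k_gt0 : (0 < k)%N by case: (k) odd_k.
  rewrite /phi deg0 invr0 mulr0 Fpk_at0 // /probR big1 // => s _.
  have nbr0 v : G u v = false.
    by move: deg0; rewrite /deg card_mkset => /card0_eq/(_ v); rewrite inE.
  by rewrite (bigD1 (Ordinal k_gt0)) //= {1}/sample_weight nbr0 !mul0r.
have sum_unseen :
    \sum_(s | ~~ seen_R x s) sample_weight G p u s = 1 - (1 - p) * phi R G x u.
  move: (sum_sample_weight u); rewrite (bigID (seen_R x)) /= sum_sample_weight_seen_R.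
  by rewrite -lt0n deg_gt0 /= mulr1n => sum1; lra.
rewrite /probR; under eq_bigr => s _ do rewrite card_mkset.
rewrite (sum_prod_card_binomial _ _ _ (fun j => if (k < 2 * j)%N then 1 else 0)).
rewrite sum_sample_weight_seen_R sum_unseen /Fpk [RHS]big_mkcond; apply: eq_bigr => j _.
by rewrite halfS_leq_odd //; case: ifP; rewrite ?mulr1 ?mulr0.
Qed.

Lemma probR_ge0 x u : 0 <= probR G p k x u.
Proof.
apply: sumr_ge0 => s _; apply: mulr_ge0; last by case: ifP.
by apply: prodr_ge0 => i _; exact: sample_weight_ge0.
Qed.

Lemma probR_le1 x u : probR G p k x u <= 1.
Proof.
rewrite probR_Fpk; apply: Fpk_le1; have := phi_ge0 x u; have := phi_le1 x u.
by move=> ? ?; rewrite mulr_ge0 ?subr_ge0 //= mulr_ile1 ?subr_ge0 // lerBlDr lerDl.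
Qed.

Lemma trans_ge0 x y : 0 <= trans G p k x y.
Proof.
apply: prodr_ge0 => u _; have := probR_le1 x u; have := probR_ge0 x u.
by case: (y u) => // _; rewrite subr_ge0.
Qed.

Lemma sum_trans x : \sum_y trans G p k x y = 1.
Proof.
rewrite /trans -(bigA_distr_bigA (fun u (b : bool) =>
  if b then probR G p k x u else 1 - probR G p k x u)).
by rewrite big1 // => u _; rewrite big_bool /= addrC subrK.
Qed.

(* The nodes update independently, so the moment generating function of
   [degR G y u] factorises over the neighbours of [u]. *)
Lemma trans_mgf x u lam :
  \sum_y trans G p k x y * expR (lam * (degR G y u)%:R) =
  \prod_v (if G u v then 1 + probR G p k x v * (expR lam - 1) else 1).
Proof.
have expR_degR y :
    expR (lam * (degR G y u)%:R) = \prod_v (if G u v && y v then expR lam else 1).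
  by rewrite mulrC expRM_natl -big_mkcond /= prodr_const /degR card_mkset cardsE.
transitivity (\sum_(y : config n) \prod_v
   ((if y v then probR G p k x v else 1 - probR G p k x v) *
    (if G u v && y v then expR lam else 1))).
  by apply: eq_bigr => y _; rewrite expR_degR /trans -big_split.
rewrite -(bigA_distr_bigA (fun v (b : bool) =>
  (if b then probR G p k x v else 1 - probR G p k x v) *
  (if G u v && b then expR lam else 1))).
by apply: eq_bigr => v _; rewrite big_bool /= andbT andbF; case: (G u v); ring.
Qed.

Lemma trans_mgf_le x u lam M : 0 <= lam ->
  (forall v, G u v -> probR G p k x v <= M) ->
  \sum_y trans G p k x y * expR (lam * (degR G y u)%:R)
    <= expR ((deg G u)%:R * M * (expR lam - 1)).
Proof.
move=> lam_ge0 le_probR_M; rewrite trans_mgf.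
have expR_lam_ge1 : 0 <= expR lam - 1 by rewrite subr_ge0 -expR0 ler_expR.
apply: le_trans (_ : _ <= expR (\sum_v
    (if G u v then probR G p k x v * (expR lam - 1) else 0))) _.
  rewrite expR_sum; apply: ler_prod => v _; case: (G u v); last first.
    by rewrite expR0 ler01 lexx.
  by rewrite expR_ge1Dx andbT addr_ge0 ?mulr_ge0 ?probR_ge0.
rewrite ler_expR (le_trans (ler_sum _ (_ : forall v, _ ->
    _ <= if G u v then M * (expR lam - 1) else 0))) //.
  by move=> v _; case: ifP => // Guv; rewrite ler_wpM2r ?le_probR_M.
by rewrite sum_if_const -card_mkset -/(deg G u) -mulrA mulr_natl.
Qed.

Lemma trans_phi_gt x u M eps : 0 < eps <= 1 -> 0 <= M <= 1 ->
  (forall v, G u v -> probR G p k x v <= M) ->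
  \sum_y trans G p k x y * (M + eps < phi R G y u)%R%:R
    <= expR (- ((deg G u)%:R * eps ^+ 2 / 8)).
Proof.
move=> /andP[eps_gt0 eps_le1] /andP[M_ge0 M_le1] le_probR_M.
have [deg0|deg_gt0] := posnP (deg G u).
  rewrite big1 ?expR_ge0 // => y _; rewrite /phi deg0 invr0 mulr0.
  by rewrite ltNge addr_ge0 ?mulr0 // ltW.
set d := (deg G u)%:R; have d_gt0 : 0 < d by rewrite ltr0n.
pose lam := eps / 4; pose t := d * (M + eps).
have markov y : (M + eps < phi R G y u)%R%:R <= expR (lam * (degR G y u)%:R - lam * t).
  rewrite /phi -/(degR G y u) -/d ltr_pdivlMr // mulrC -mulrBr.
  by apply: indicator_lt_le_expR; rewrite divr_ge0 ?ltW.
apply: le_trans (_ : _ <= expR (- (lam * t)) *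
    \sum_y trans G p k x y * expR (lam * (degR G y u)%:R)) _.
  rewrite mulr_sumr; apply: ler_sum => y _; rewrite mulrCA ler_wpM2l ?trans_ge0 //.
  by rewrite -expRD [X in expR X]addrC.
apply: le_trans (_ : _ <= expR (- (lam * t)) * expR (d * M * (expR lam - 1))) _.
  by rewrite ler_wpM2l ?expR_ge0 // trans_mgf_le // divr_ge0 ?ltW.
rewrite -expRD ler_expR.
have dM_ge0 : 0 <= d * M by rewrite mulr_ge0 // ltW.
have expR_lam_le : expR lam - 1 <= lam + 2 * lam ^+ 2.
  by apply: expR_sub1_le; rewrite /lam; apply/andP; split; lra.
have dM_expR_le := ler_wpM2l dM_ge0 expR_lam_le.
have dMeps_le : d * M * eps ^+ 2 <= d * eps ^+ 2.
  by rewrite -mulrA mulrCA; apply: ler_piMl; rewrite // mulr_ge0 ?sqr_ge0 // ltW.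
by move: dM_expR_le dMeps_le; rewrite /lam /t; lra.
Qed.

Lemma phimax_le1 x : phimax R G x <= 1.
Proof. by apply/bigmax_leP; split=> // u _; exact: phi_le1. Qed.

Lemma probR_le_descent x v c g :
  (forall z, 0 <= z <= 1 -> Fpk p k z <= Num.max (z - c) g) ->
  probR G p k x v <= Num.max (phimax R G x - c) g.
Proof.
move=> gap; rewrite probR_Fpk; apply: le_trans (gap _ _) _.
  by rewrite phi_ge0 phi_le1.
by apply: le_max2; rewrite // lerD2r le_bigmax.
Qed.

Lemma trans_phimax_gt x M eps D : 0 < eps <= 1 -> 0 <= M <= 1 ->
  (forall v, probR G p k x v <= M) -> (forall u, D <= (deg G u)%:R) ->
  \sum_y trans G p k x y * (M + eps < phimax R G y)%R%:R
    <= n%:R * expR (- (D * eps ^+ 2 / 8)).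
Proof.
move=> eps01 M01 le_probR_M le_D_deg.
have /andP[eps_gt0 _] := eps01; have /andP[M_ge0 _] := M01.
apply: le_trans (_ : _ <= \sum_u \sum_y trans G p k x y * (M + eps < phi R G y u)%R%:R) _.
  rewrite exchange_big /=; apply: ler_sum => y _.
  rewrite -mulr_sumr ler_wpM2l ?trans_ge0 // bigmax_gt_indicator_le_sum //.
  by rewrite addr_ge0 // ltW.
apply: le_trans (_ : _ <= \sum_(u < n) expR (- (D * eps ^+ 2 / 8))) _; last first.
  by rewrite sumr_const card_ord mulr_natl.
apply: ler_sum => u _.
apply: le_trans (trans_phi_gt eps01 M01 (fun v _ => le_probR_M v)) _.
by rewrite ler_expR lerN2; have := le_D_deg u; have := sqr_ge0 eps; nra.
Qed.

End OneRound.

Lemma max_descent (R : realFieldType) (a : nat -> R) (a0 g e : R) (T : nat) :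
  0 <= e -> a 0%N <= a0 ->
  (forall j, (j < T)%N -> a j.+1 <= Num.max (a j - 2 * e) g + e) ->
  forall j, (j <= T)%N -> a j <= Num.max (a0 - j%:R * e) (g + e).
Proof.
move=> e_ge0 a0_ge step; elim=> [_|j IHj lt_jT].
  by rewrite mul0r subr0 le_max a0_ge.
apply: le_trans (step _ lt_jT) _; move: (IHj (ltnW lt_jT)).
rewrite -natr1 /Num.max; do ![case: ltP => ?]; lra.
Qed.

Section HittingProbability.
Variables (R : realType) (n : nat) (G : rel 'I_n) (p : R) (k : nat).
Hypotheses (p_ge0 : 0 <= p) (p_le1 : p <= 1) (odd_k : odd k).
Variables (gamma : R) (T : nat).

Lemma path_mass_le_prob_hit (good : rel (config n)) :
  (forall w : {ffun 'I_T.+1 -> config n}, w ord0 = allR n ->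
     (forall t : 'I_T, good (w (inord t)) (w (inord t.+1))) ->
     exists t, phimax R G (w t) <= gamma) ->
  path_mass (fun x y => trans G p k x y * (good x y)%:R) (allR n) T
    <= prob_hit G p k gamma T.
Proof.
move=> hits; rewrite /prob_hit /path_mass [leRHS]big_mkcond [leLHS]big_mkcond.
apply: ler_sum => w _; have [w0 /=|//] := eqVneq (w ord0) (allR n).
have [_|no_hit] := boolP [exists t, phimax R G (w t) <= gamma].
  apply: ler_prod => t _.
  have := trans_ge0 G p_ge0 p_le1 odd_k (w (inord t)) (w (inord t.+1)).
  by move=> trans_ge0; rewrite mulr_ge0 //= ler_piMr // lern1 leq_b1.
have [t bad_t] : exists t : 'I_T, ~~ good (w (inord t)) (w (inord t.+1)).
  apply/existsP; apply: contraNT no_hit => /existsPn all_good.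
  by have [t ht] := hits w w0 (fun t => negbNE (all_good t)); apply/existsP; exists t.
by rewrite (bigD1 t) //= (negbTE bad_t) mulr0 mul0r.
Qed.

Variables (g eps : R).
Hypothesis eps01 : 0 < eps <= 1.
Hypothesis le_gamma : Num.max (1 - T%:R * eps) (g + eps) <= gamma.

Definition descent_step (x y : config n) : bool :=
  phimax R G y <= Num.max (phimax R G x - 2 * eps) g + eps.

Lemma descent_path_hits (w : {ffun 'I_T.+1 -> config n}) :
  w ord0 = allR n -> (forall t : 'I_T, descent_step (w (inord t)) (w (inord t.+1))) ->
  exists t, phimax R G (w t) <= gamma.
Proof.
move=> w0 steps; exists ord_max; apply: le_trans le_gamma.
have -> : w ord_max = w (inord T) by congr (w _); apply/val_inj; rewrite /= inordK.
apply: (@max_descent _ (fun j => phimax R G (w (inord j))) 1 g eps T) => //.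
- by case/andP: eps01 => /ltW.
- have -> : inord 0 = ord0 :> 'I_T.+1 by apply/val_inj; rewrite /= inordK.
  by rewrite w0 phimax_le1.
- by move=> j lt_jT; exact: (steps (Ordinal lt_jT)).
Qed.

Lemma prob_hit_ge_descent (D : R) :
  0 <= g <= 1 ->
  (forall z, 0 <= z <= 1 -> Fpk p k z <= Num.max (z - 2 * eps) g) ->
  (forall u, D <= (deg G u)%:R) ->
  1 - T%:R * (n%:R * expR (- (D * eps ^+ 2 / 8))) <= prob_hit G p k gamma T.
Proof.
move=> /andP[g_ge0 g_le1] gap le_D_deg; have /andP[eps_gt0 _] := eps01.
pose K x y := trans G p k x y * (descent_step x y)%:R.
apply: le_trans (path_mass_le_prob_hit descent_path_hits).
have trans_ge0 := trans_ge0 G p_ge0 p_le1 odd_k.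
have rowK x : 1 - n%:R * expR (- (D * eps ^+ 2 / 8)) <= \sum_y K x y <= 1.
  pose M : R := Num.max (phimax R G x - 2 * eps) g.
  have M01 : 0 <= M <= 1.
    have := phimax_le1 R G x; rewrite /M le_max ge_max g_ge0 g_le1 orbT /= andbT.
    by move=> ?; lra.
  have fail_le := trans_phimax_gt p_ge0 p_le1 odd_k eps01 M01
    (fun v => probR_le_descent G odd_k x v gap) le_D_deg.
  have fail_ge0 : 0 <= \sum_y trans G p k x y * (M + eps < phimax R G y)%R%:R.
    by apply: sumr_ge0 => y _; rewrite mulr_ge0.
  have K_split :
      \sum_y K x y + \sum_y trans G p k x y * (M + eps < phimax R G y)%R%:R = 1.
    rewrite -big_split -[RHS](sum_trans G p k x); apply: eq_bigr => y _.
    rewrite /K /descent_step -/M leNgt /= -mulrDr.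
    by case: (M + eps < phimax R G y); rewrite /= ?add0r ?addr0 mulr1.
  by apply/andP; split; lra.
have K_ge0 x y : 0 <= K x y by rewrite mulr_ge0.
have delta_ge0 : 0 <= n%:R * expR (- (D * eps ^+ 2 / 8)) by rewrite mulr_ge0 ?expR_ge0.
by case/andP: (path_mass_bounds (allR n) K_ge0 delta_ge0 rowK T).
Qed.

End HittingProbability.

(* For [D = 24 ln n / eps^2] a round fails with probability at most [n * n^-3]. *)
Lemma union_bound_vanishes (R : realType) (eps eps' : R) (T n : nat) :
  0 < eps -> 0 < eps' -> (0 < n)%N -> (Num.bound (T%:R / eps') <= n)%N ->
  T%:R * (n%:R * expR (- (24 / eps ^+ 2 * ln (n%:R : R) * eps ^+ 2 / 8))) <= eps'.
Proof.
move=> eps_gt0 eps'_gt0 n_gt0 le_bound_n.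
have n_ge1 : 1 <= n%:R :> R by rewrite ler1n.
have -> : 24 / eps ^+ 2 * ln (n%:R : R) * eps ^+ 2 / 8 = 3%:R * ln n%:R.
  by field; rewrite gt_eqF.
rewrite expRN expRM_natl lnK ?posrE ?ltr0n //.
have -> : n%:R * (n%:R ^+ 3)^-1 = (n%:R ^+ 2)^-1 :> R.
  by field; rewrite gt_eqF // ltr0n.
have T_lt : T%:R < eps' * n%:R.
  rewrite mulrC -ltr_pdivrMr //; apply: lt_le_trans (archi_boundP _) _.
    by rewrite divr_ge0 // ltW.
  by rewrite ler_nat.
rewrite ler_pdivrMr ?exprn_gt0 ?ltr0n //; apply: le_trans (ltW T_lt) _.
by rewrite ler_pM2l // expr2 ler_peMr // (le_trans ler01).
Qed.

Unset Implicit Arguments.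

Theorem proposition5p7 (R : realType) (k : nat) (p : R)
  (hk3 : (3 <= k)%N) (hkodd : odd k)
  (hp1 : pstar R k < p) (hp2 : p <= 1) :
  forall gamma : R, 0 < gamma ->
  exists T : nat,
  forall G : forall n : nat, rel 'I_n,
    (forall n, symmetric (G n)) ->
    (forall n, irreflexive (G n)) ->
    (* min_v delta_v = omega(log n) *)
    (forall C : R, 0 < C -> exists N : nat, forall n : nat, (N <= n)%N ->
        forall u : 'I_n, C * ln (n%:R : R) <= (deg (G n) u)%:R) ->
    (* Pr(exists t <= T : phi_max^(t) <= gamma) = 1 - o(1) *)
    (forall eps : R, 0 < eps -> exists N : nat, forall n : nat, (N <= n)%N ->
        1 - eps <= prob_hit (G n) p k gamma T).
Proof.
move=> gamma gamma_gt0.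
have [g [eps [T [eps01 g01 gap le_gamma]]]] := descent_parameters hkodd hp1 hp2 gamma_gt0.
exists T => G _ _ deg_ge eps' eps'_gt0.
have /andP[eps_gt0 _] := eps01.
have [|N deg_ge_N] := deg_ge (24 / eps ^+ 2); first by rewrite divr_gt0 ?exprn_gt0.
exists (maxn N (Num.bound (T%:R / eps')).+1) => n.
rewrite geq_max => /andP[le_Nn lt_bound_n].
have p_ge0 := ltW (p_gt0 hkodd hp1).
apply: le_trans (prob_hit_ge_descent p_ge0 hp2 hkodd eps01 le_gamma g01 gap
  (deg_ge_N n le_Nn)).
rewrite lerD2l lerN2; apply: union_bound_vanishes => //; last exact: ltnW.
exact: leq_ltn_trans (leq0n _) lt_bound_n.
Qed.
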